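(* Let $\gamma\in\Gamma$, $d=e_1+\varepsilon\gamma$, and suppose $g^*(d)=A_{\phi(\gamma)}d$ for all small $\varepsilon>0$. Suppose that after $r$ edge failures the graph $\mathcal G^{(r+1)}$ is still connected (so $d^{(r+1)}=d$ and $g^{(r+1)}=g^*(d)$), and let $j,k\in\mathcal E^{(r+1)}$ be such that the sign of $f^{(r+1)}_j(d)f^{(r+1)}_k(d)$ is the same (either $\ge0$ or $\le0$) for all small $\varepsilon$. Then $\psi^{(r+1)}_j(d)=\psi^{(r+1)}_k(d)$ for all $\varepsilon\ge0$ sufficiently small if and only if all three of the following hold: $$e_1^TQ^{(r+1)}(A_{\phi(\gamma)}-I)e_1=0,$$ $$e_1^T\big[Q^{(r+1)}(A_{\phi(\gamma)}-I)+(A_{\phi(\gamma)}-I)^T(Q^{(r+1)})^T\big]\gamma=0,$$ $$\gamma^TQ^{(r+1)}(A_{\phi(\gamma)}-I)\gamma=0,$$ where $Q^{(r+1)}=v_j^Tv_k^{(r+1)}-v_k^Tv_j^{(r+1)}$ if $f^{(r+1)}_k(d)f^{(r+1)}_j(d)\ge0$ and $Q^{(r+1)}=v_j^Tv_k^{(r+1)}+v_k^Tv_j^{(r+1)}$ otherwise.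
   Context: $\mathcal G$ is a simple connected oriented graph with nodes $\{1,\dots,n\}$, $m$ edges, incidence matrix $C$, PTDF matrix $V=C(C^TC)^+$; $e$ all-ones; $\lambda\in(0,1)$, $\lambda^*\ge\lambda$. $\Gamma=\{\gamma\in\mathbb R^n:\gamma_1=0,\gamma\ge0,e^T\gamma=1\}$. $g^*(d)$ is the DC-OPF optimal generation (unique minimizer of $\frac12\sum g_i^2$ over $g\ge0$ with $e^Tg=e^Td$, $-\lambda|Vd|\le V(d-g)\le\lambda|Vd|$), and $A_{\phi(\gamma)}\in\mathbb R^{n\times n}$ is a matrix, depending only on $\gamma$, with $g^*(d)=A_{\phi(\gamma)}d$ for small $\varepsilon>0$. In the cascade, after $r$ edge failures the graph is $\mathcal G^{(r+1)}$ with surviving edges $\mathcal E^{(r+1)}$ and PTDF matrix $V^{(r+1)}$ (computed from the incidence matrix with rows of removed edges zeroed); flows are $f^{(r+1)}(d)=V^{(r+1)}(d^{(r+1)}-g^{(r+1)})$, emergency limits $F(d)=\lambda^*Vd$, relative exceedances $\psi^{(r+1)}_i(d)=|f^{(r+1)}_i(d)|/F_i(d)$. $v_l=e_l^TV$ and $v^{(r+1)}_l=e_l^TV^{(r+1)}$ are the $l$-th rows. *)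

From HB Require Import structures.
From mathcomp Require Import all_boot all_order all_algebra.
From mathcomp Require Import reals.
Set Implicit Arguments. Unset Strict Implicit. Unset Printing Implicit Defensive.
Import Order.TTheory GRing.Theory Num.Theory.
Local Open Scope ring_scope.

(* Nodes are 'I_n.+1 (the paper's node 1 is ord0, the paper's n is n.+1);
   edges are 'I_m.  Edge i is oriented from [src i] to [dst i]. *)

Section Defs.
Variable R : realType.

Definition simple_graph (n m : nat) (src dst : 'I_m -> 'I_n) : Prop :=
  (forall i, src i != dst i) /\
  (forall i i', (src i == src i') && (dst i == dst i') ||
                (src i == dst i') && (dst i == src i') -> i = i').

Definition adj_in (n m : nat) (src dst : 'I_m -> 'I_n) (S : {set 'I_m}) :
  rel 'I_n :=
  fun x y => [exists i, (i \in S) &&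
     (((src i == x) && (dst i == y)) || ((src i == y) && (dst i == x)))].

Definition connected_in (n m : nat) (src dst : 'I_m -> 'I_n) (S : {set 'I_m}) :
  Prop := forall x y, connect (adj_in src dst S) x y.

Definition incidence (n m : nat) (src dst : 'I_m -> 'I_n) : 'M[R]_(m, n) :=
  \matrix_(i, k) ((k == src i)%:R - (k == dst i)%:R).

(* incidence matrix with the rows of the removed edges (outside S) zeroed *)
Definition incidence_in (n m : nat) (src dst : 'I_m -> 'I_n)
  (S : {set 'I_m}) : 'M[R]_(m, n) :=
  \matrix_(i, k) (if i \in S then incidence src dst i k else 0).

Definition is_pinv (n : nat) (M P : 'M[R]_n) : Prop :=
  [/\ M *m P *m M = M, P *m M *m P = P,
      (M *m P)^T = M *m P & (P *m M)^T = P *m M].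

Definition is_PTDF (n m : nat) (C : 'M[R]_(m, n)) (V : 'M[R]_(m, n)) : Prop :=
  exists P : 'M[R]_n, is_pinv (C^T *m C) P /\ V = C *m P.

Definition sumv (n : nat) (x : 'cV[R]_n) : R := \sum_i x i 0.

Definition in_Gamma (n : nat) (g : 'cV[R]_n.+1) : Prop :=
  g ord0 0 = 0 /\ (forall i, 0 <= g i 0) /\ sumv g = 1.

Definition opf_feasible (n m : nat) (V : 'M[R]_(m, n)) (lam : R)
  (d g : 'cV[R]_n) : Prop :=
  [/\ forall i, 0 <= g i 0, sumv g = sumv d &
      forall l, `|(V *m (d - g)) l 0| <= lam * `|(V *m d) l 0|].

Definition opf_opt (n m : nat) (V : 'M[R]_(m, n)) (lam : R)
  (d g : 'cV[R]_n) : Prop :=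
  opf_feasible V lam d g /\
  forall g', opf_feasible V lam d g' ->
    \sum_i (g i 0) ^+ 2 / 2 <= \sum_i (g' i 0) ^+ 2 / 2.

Definition small_pos (P : R -> Prop) : Prop :=
  exists2 delta : R, 0 < delta & forall eps, 0 < eps -> eps < delta -> P eps.
Definition small_nneg (P : R -> Prop) : Prop :=
  exists2 delta : R, 0 < delta & forall eps, 0 <= eps -> eps < delta -> P eps.

Definition e1 (n : nat) : 'cV[R]_n.+1 := delta_mx ord0 0.
Definition dem (n : nat) (gam : 'cV[R]_n.+1) (eps : R) : 'cV[R]_n.+1 :=
  e1 n + eps *: gam.

Definition flow (n m : nat) (Vr : 'M[R]_(m, n)) (A : 'M[R]_n) (d : 'cV[R]_n)
  (l : 'I_m) : R := (Vr *m (d - A *m d)) l 0.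

Definition elim (n m : nat) (V : 'M[R]_(m, n)) (lams : R) (d : 'cV[R]_n)
  (l : 'I_m) : R := lams * (V *m d) l 0.

Definition psi (n m : nat) (V Vr : 'M[R]_(m, n)) (A : 'M[R]_n) (lams : R)
  (d : 'cV[R]_n) (l : 'I_m) : R :=
  `|flow Vr A d l| / elim V lams d l.

Definition Qmat (n m : nat) (V Vr : 'M[R]_(m, n)) (j k : 'I_m) (s : bool) :
  'M[R]_n :=
  if s then (row j V)^T *m row k Vr - (row k V)^T *m row j Vr
  else (row j V)^T *m row k Vr + (row k V)^T *m row j Vr.

End Defs.

From HB Require Import structures.
From mathcomp Require Import all_boot all_order all_algebra.
From mathcomp Require Import reals.
From mathcomp Require Import ring lra.
Set Implicit Arguments. Unset Strict Implicit. Unset Printing Implicit Defensive.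
Import Order.TTheory GRing.Theory Num.Theory.
Local Open Scope ring_scope.

(* Clearing denominators, psi_j = psi_k says |f_j| F_k = |f_k| F_j; since
   f_j f_k has a fixed sign the absolute values can be dropped, leaving
   f_j F_k -/+ f_k F_j = 0.  Both flows and both limits are linear in the
   demand d, so this is the quadratic form d^T Q (A - I) d (up to a
   nonzero factor), and with d = e_1 + eps gamma it is a polynomial of degree
   two in eps, which vanishes on [0, delta) iff its three coefficients do. *)

Lemma mx11_eq0 (R : pzRingType) (X : 'M[R]_1) : X = 0 <-> X 0 0 = 0.
Proof.
split=> [->|X00]; first by rewrite mxE.
by apply/matrixP=> i l; rewrite !ord1 X00 mxE.
Qed.

Lemma trmx11 (R : Type) (X : 'M[R]_1) : X^T = X.
Proof. by apply/matrixP=> i l; rewrite !ord1 mxE. Qed.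

Lemma quad_formD (R : comPzRingType) p (M : 'M[R]_p) (x y : 'cV[R]_p) (e : R) :
  (x + e *: y)^T *m M *m (x + e *: y) =
  x^T *m M *m x + e *: (x^T *m (M + M^T) *m y) + e ^+ 2 *: (y^T *m M *m y).
Proof.
have quad_formC : y^T *m M *m x = x^T *m M^T *m y.
  by rewrite -[LHS]trmx11 !trmx_mul trmxK mulmxA.
rewrite [(_ + _)^T]linearD /= [(_ *: _)^T]linearZ /= !(mulmxDl, mulmxDr).
rewrite -!scalemxAl -!scalemxAr quad_formC scalerA -expr2 scalerDr.
by rewrite [e *: (x^T *m M *m y) + e *: _]addrC !addrA.
Qed.

Lemma quad_form_outer (R : comPzRingType) p q (V W : 'M[R]_(q, p))
    (B : 'M[R]_p) (x : 'cV[R]_p) a b :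
  (x^T *m ((row a V)^T *m row b W *m B) *m x) 0 0 =
  (V *m x) a 0 * (W *m (B *m x)) b 0.
Proof.
rewrite !mulmxA -trmx_mul -row_mul -!mulmxA -row_mul.
by rewrite mxE big_ord1 !mxE.
Qed.

Lemma normM_eq_ge0 (R : realDomainType) (a b c d : R) : 0 <= a * b ->
  `|a| * c = `|b| * d <-> a * c = b * d.
Proof.
move=> ab_ge0; case: (lerP 0 a) => a0; case: (lerP 0 b) => b0;
  rewrite ?(ger0_norm a0) ?(ger0_norm b0) ?(ltr0_norm a0) ?(ltr0_norm b0).
- by [].
- have -> : a = 0 by nra.
  by rewrite !mul0r; split; lra.
- have -> : b = 0 by nra.
  by rewrite !mul0r; split; lra.
- by split; lra.
Qed.

Lemma normM_eq_le0 (R : realDomainType) (a b c d : R) : a * b <= 0 ->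
  `|a| * c = `|b| * d <-> a * c = - (b * d).
Proof.
move=> ab_le0; rewrite -[`|b|]normrN -mulNr; apply: normM_eq_ge0.
by rewrite mulrN oppr_ge0.
Qed.

Section SmallNonneg.
Variable R : realType.
Implicit Types P Q : R -> Prop.

Lemma small_nneg_and P Q :
  small_nneg P -> small_nneg Q -> small_nneg (fun e => P e /\ Q e).
Proof.
move=> [d1 d1_gt0 P1] [d2 d2_gt0 Q2].
exists (Num.min d1 d2) => [|e e_ge0]; first by rewrite lt_min d1_gt0.
by rewrite lt_min => /andP[e_lt1 e_lt2]; split; [exact: P1 | exact: Q2].
Qed.

Lemma small_nneg_iff P Q :
  small_nneg (fun e => P e <-> Q e) -> small_nneg P <-> small_nneg Q.
Proof.
move=> PQ; split=> /(small_nneg_and PQ) [d d_gt0 PQd]; exists d => // e e0 ed;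
  by have [[PQe QPe] ?] := PQd e e0 ed; auto.
Qed.

Lemma small_nneg_quadratic (W : lmodType R) (a b c : W) :
  small_nneg (fun e => a + e *: b + e ^+ 2 *: c = 0) <->
  [/\ a = 0, b = 0 & c = 0].
Proof.
split=> [[d d_gt0 abc0]|[-> -> ->]]; last first.
  by exists 1 => // e _ _; rewrite !scaler0 !addr0.
have a0 : a = 0.
  by have := abc0 0 (lexx 0) d_gt0; rewrite !scale0r expr0n /= scale0r !addr0.
have bc0 e : 0 < e -> e < d -> b + e *: c = 0.
  move=> e_gt0 e_lt; have := abc0 e (ltW e_gt0) e_lt.
  rewrite a0 add0r expr2 -scalerA -scalerDr => /eqP.
  by rewrite scaler_eq0 gt_eqF //= => /eqP.
have bc2 : b + (d / 2) *: c = 0 by apply: bc0; lra.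
have bc4 : b + (d / 4) *: c = 0 by apply: bc0; lra.
have c0 : c = 0.
  have /eqP : (d / 2 - d / 4) *: c = 0.
    by rewrite scalerBl -(addrKA b) [_ + b]addrC bc2 bc4 subr0.
  have gap_gt0 : 0 < d / 2 - d / 4 by lra.
  by rewrite scaler_eq0 gt_eqF //= => /eqP.
by split=> //; move: bc2; rewrite c0 scaler0 addr0.
Qed.
End SmallNonneg.

Section QuadraticForm.
Variables (R : realType) (p q : nat) (V Vr : 'M[R]_(q, p)) (A : 'M[R]_p).
Variables (lams : R) (j k : 'I_q).

Lemma Qmat_quad_form (x : 'cV[R]_p) (s : bool) :
  lams * (x^T *m (Qmat V Vr j k s *m (A - 1%:M)) *m x) 0 0 =
  if s then flow Vr A x j * elim V lams x k - flow Vr A x k * elim V lams x j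
  else - (flow Vr A x j * elim V lams x k + flow Vr A x k * elim V lams x j).
Proof.
have outer a b : (x^T *m ((row a V)^T *m row b Vr *m (A - 1%:M)) *m x) 0 0 =
                 - ((V *m x) a 0 * flow Vr A x b).
  rewrite quad_form_outer /flow mulmxBl mul1mx -opprB mulmxN.
  by rewrite [X in _ * X = _]mxE mulrN.
rewrite /Qmat /elim; case: s.
  rewrite mulmxBl mulmxBr mulmxBl mxE [X in _ + X]mxE !outer; ring.
rewrite mulmxDl mulmxDr mulmxDl mxE !outer; ring.
Qed.

Lemma psi_eq_iff_quad_form (x : 'cV[R]_p) (s : bool) :
  0 < lams -> elim V lams x j != 0 -> elim V lams x k != 0 ->
  (if s then 0 <= flow Vr A x j * flow Vr A x k
   else flow Vr A x j * flow Vr A x k <= 0) ->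
  psi V Vr A lams x j = psi V Vr A lams x k <->
  x^T *m (Qmat V Vr j k s *m (A - 1%:M)) *m x = 0.
Proof.
move=> lams_gt0 Fj_neq0 Fk_neq0 flow_sign.
have lams_quad0 (y : R) : lams * y = 0 <-> y = 0.
  by split=> [/eqP|->]; [rewrite mulf_eq0 gt_eqF //= => /eqP | rewrite mulr0].
apply: iff_trans _ (iff_sym (mx11_eq0 _)); apply: iff_trans _ (lams_quad0 _).
rewrite Qmat_quad_form /psi.
apply: iff_trans (rwP (@eqP R _ _)) _; rewrite eqr_div //.
apply: iff_trans (iff_sym (rwP (@eqP R _ _))) _.
case: s flow_sign => flow_sign.
- by apply: iff_trans (normM_eq_ge0 _ _ flow_sign) _; split; lra.
- by apply: iff_trans (normM_eq_le0 _ _ flow_sign) _; split; lra.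
Qed.
End QuadraticForm.

Theorem mainTheorem11 (R : realType) (n m : nat)
  (src dst : 'I_m -> 'I_n.+1) (V : 'M[R]_(m, n.+1)) (lam lams : R)
  (gam : 'cV[R]_n.+1) (A : 'M[R]_n.+1)
  (S : {set 'I_m}) (Vr : 'M[R]_(m, n.+1)) (j k : 'I_m) (s : bool) :
  simple_graph src dst ->
  connected_in src dst [set: 'I_m] ->
  is_PTDF (incidence R src dst) V ->
  0 < lam -> lam < 1 -> lam <= lams ->
  in_Gamma gam ->
  small_pos (fun eps => opf_opt V lam (dem gam eps) (A *m dem gam eps)) ->
  connected_in src dst S ->
  is_PTDF (incidence_in R src dst S) Vr ->
  j \in S -> k \in S ->
  (if s then
     small_nneg (fun eps =>
       0 <= flow Vr A (dem gam eps) j * flow Vr A (dem gam eps) k)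
   else
     small_nneg (fun eps =>
       flow Vr A (dem gam eps) j * flow Vr A (dem gam eps) k <= 0)) ->
  small_nneg (fun eps => elim V lams (dem gam eps) j != 0 /\
                         elim V lams (dem gam eps) k != 0) ->
  (small_nneg (fun eps => psi V Vr A lams (dem gam eps) j =
                          psi V Vr A lams (dem gam eps) k)
   <->
   [/\ (e1 R n)^T *m Qmat V Vr j k s *m (A - 1%:M) *m e1 R n = 0,
       (e1 R n)^T *m (Qmat V Vr j k s *m (A - 1%:M)
                    + (A - 1%:M)^T *m (Qmat V Vr j k s)^T) *m gam = 0
     & gam^T *m Qmat V Vr j k s *m (A - 1%:M) *m gam = 0]).
Proof.
move=> _ _ _ lam_gt0 _ lam_le _ _ _ _ _ _ flow_sign elim_neq0.
have lams_gt0 : 0 < lams by apply: lt_le_trans lam_le.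
have {}flow_sign : small_nneg (fun e => if s
      then 0 <= flow Vr A (dem gam e) j * flow Vr A (dem gam e) k
      else flow Vr A (dem gam e) j * flow Vr A (dem gam e) k <= 0).
  by case: s flow_sign.
set M := Qmat V Vr j k s *m (A - 1%:M).
rewrite -(trmx_mul (Qmat V Vr j k s)) -/M -!(mulmxA _ (Qmat V Vr j k s)) -/M.
rewrite -small_nneg_quadratic; apply: small_nneg_iff.
case: (small_nneg_and flow_sign elim_neq0) => d d_gt0 hyps_d.
exists d => // e e_ge0 e_lt; have [sign_e [Fj Fk]] := hyps_d e e_ge0 e_lt.
by rewrite -quad_formD; apply: psi_eq_iff_quad_form.
Qed.
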